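(* Let $p$ be a prime number and let $a$ be an integer not divisible by $p$. Then the sequence $$\left(\vartheta_p\left(\sum_{k=1}^{n}\left(\frac{1}{a^k}+\frac{1}{(p-a)^k}\right)\frac{p^k}{k}\right)\right)_{n\geq 1}$$ is unbounded from above.
   Context: For a prime $p$ and a rational number $r$, $\vartheta_p(r)$ denotes the $p$-adic valuation of $r$ (with $\vartheta_p(0)=+\infty$). *)

From mathcomp Require Import all_boot all_order all_algebra.
Set Implicit Arguments. Unset Strict Implicit. Unset Printing Implicit Defensive.
Import Order.TTheory GRing.Theory Num.Theory.
Local Open Scope ring_scope.

(* p-adic valuation of a rational number: None stands for +oo (r = 0);
   otherwise v_p(numerator) - v_p(denominator). *)
Definition padic_val (p : nat) (r : rat) : option int :=
  if r == 0 then None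
  else Some ((logn p `|numq r|%N)%:Z - (logn p `|denq r|%N)%:Z).

Definition lt_ext (M : int) (v : option int) : Prop :=
  match v with None => True | Some w => M < w end.

Definition S (p : nat) (a : int) (n : nat) : rat :=
  \sum_(1 <= k < n.+1)
     (((a%:~R : rat) ^- k + ((p%:Z - a)%:~R : rat) ^- k) * (p%:R : rat) ^+ k / k%:R).

From mathcomp Require Import all_boot all_order all_algebra.
From mathcomp Require Import ring zify.
Import Order.TTheory GRing.Theory Num.Theory.
Local Open Scope ring_scope.

Set Implicit Arguments.
Unset Strict Implicit.
Unset Printing Implicit Defensive.

(* Put x = p/a and y = p/(p-a).  Then x y = x + y =: s, so (1 - x t)(1 - y t) = 1 - s t (1 - t)
   and, taking logarithms, (x^k + y^k)/k is the coefficient of t^k in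
   sum_m (s t (1 - t))^m / m.  Summing over k <= n, the alternating binomial sums telescope:
   S_n = sum_(m <= n) (-1)^(n-m) C(m-1, n-m) s^m / m, where only the terms with 2m > n survive.
   As v_p(s) >= 2, each of them has valuation >= 2m - log_p m > m > n/2. *)

(* Pascal's rule for the numbers (i + j) / i * 'C(i, j), with denominators cleared. *)
Lemma bin_weighted_rec i j : (i * ((i + j).+2 * 'C(i.+1, j.+1)) =
  i.+1 * ((i + j).+1 * 'C(i, j.+1) + (i + j) * 'C(i, j)))%N.
Proof.
have [lt_ij | le_ji] := ltnP i j; first by rewrite !bin_small ?muln0 // ltnS ltnW.
have := mul_bin_left i j; rewrite binS; move: 'C(i, j) 'C(i, j.+1) => c c'.
nia.
Qed.

Section LogExpansion.
Variable R : numFieldType.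

(* The coefficient of s^m t^k in -log (1 - s t (1 - t)); it is 0 for m = 0 since x / 0 = 0. *)
Definition log_coef (k m : nat) : R := (-1) ^+ (k - m) * 'C(m, k - m)%:R / m%:R.

Definition log_poly (s : R) (k : nat) : R := \sum_(m < k.+1) log_coef k m * s ^+ m.

Lemma log_coef0 k : log_coef k 0 = 0.
Proof. by rewrite /log_coef invr0 mulr0. Qed.

Lemma log_coef_diag k : (0 < k)%N -> k%:R * log_coef k k = 1.
Proof.
by move=> k_gt0; rewrite /log_coef subnn bin0 expr0 !mul1r divff // pnatr_eq0 -lt0n.
Qed.

Lemma log_coef_rec k i : (0 < k)%N -> (i <= k)%N ->
  k.+2%:R * log_coef k.+2 i.+1 = k.+1%:R * log_coef k.+1 i - k%:R * log_coef k i.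
Proof.
move=> k_gt0 le_ik; rewrite -(subnKC le_ik) in k_gt0 *.
move: (k - i)%N k_gt0 => j {le_ik}; rewrite /log_coef subSS -!addnS !addKn.
case: i => [|i] ij_gt0.
  by rewrite bin_small // !(mulr0n, mul0r, mulr0, invr0) subr0.
have := congr1 (fun n => n%:R : R) (bin_weighted_rec i.+1 j).
rewrite /= !natrM natrD !natrM => weighted; rewrite !addnS.
have -> : 'C(i.+2, j.+1)%:R = i.+2%:R *
    ((i.+1 + j).+1%:R * 'C(i.+1, j.+1)%:R + (i.+1 + j)%:R * 'C(i.+1, j)%:R) /
    (i.+1%:R * (i.+1 + j).+2%:R) :> R.
  by rewrite -weighted; field; rewrite !nat1r -!natrD !pnatr_eq0.
by rewrite exprS; field; rewrite !nat1r -!natrD !pnatr_eq0.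
Qed.

Lemma log_poly_rec s k : (0 < k)%N ->
  k.+2%:R * log_poly s k.+2 = s * (k.+1%:R * log_poly s k.+1) - s * (k%:R * log_poly s k).
Proof.
move=> k_gt0; rewrite /log_poly big_ord_recl log_coef0 mul0r add0r.
rewrite big_ord_recr [in X in s * (_ * X)]big_ord_recr /bump /=.
have diag n : (0 < n)%N -> n%:R * (log_coef n n * s ^+ n) = s ^+ n.
  by move=> n_gt0; rewrite mulrA log_coef_diag // mul1r.
rewrite !mulrDr !diag // -exprS addrAC; congr (_ + _).
rewrite !mulr_sumr -sumrB; apply: eq_bigr => i _.
have le_ik : (i <= k)%N by rewrite -ltnS.
by rewrite mulrA log_coef_rec // exprS; ring.
Qed.

Lemma power_sum_rec (x y : R) k : x * y = x + y ->
  x ^+ k.+2 + y ^+ k.+2 = (x + y) * (x ^+ k.+1 + y ^+ k.+1) - (x + y) * (x ^+ k + y ^+ k).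
Proof. by move=> xy; rewrite -[in X in _ - X]xy !exprS; ring. Qed.

Lemma power_sum_log_poly (x y : R) k : x * y = x + y -> (0 < k)%N ->
  x ^+ k + y ^+ k = k%:R * log_poly (x + y) k.
Proof.
move=> xy; pose P k := x ^+ k + y ^+ k = k%:R * log_poly (x + y) k.
suff P12 n : P n.+1 /\ P n.+2 by case: k => // k _; case: (P12 k).
elim: n => [|n [IH1 IH2]]; last first.
  by split=> //; rewrite /P power_sum_rec // IH1 IH2 [RHS]log_poly_rec.
rewrite /P /log_poly; split; rewrite !big_ord_recr big_ord0 /= /log_coef.
  by rewrite invr0 !mulr0 add0r subnn bin0; field.
rewrite subn0 subSnn subnn bin0 binn invr0 !mulr0 add0r.
have -> : x ^+ 2 + y ^+ 2 = (x + y) ^+ 2 - 2 * (x * y) by ring.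
by rewrite xy; field.
Qed.

Lemma sum_log_poly s n : \sum_(1 <= k < n.+1) log_poly s k =
  \sum_(m < n.+1) (-1) ^+ (n - m) * 'C(m.-1, n - m)%:R * s ^+ m / m%:R.
Proof.
elim: n => [|n IH]; first by rewrite big_geq // big_ord_recl big_ord0 invr0 !mulr0 add0r.
rewrite big_nat_recr //= IH /log_poly [RHS]big_ord_recr [in X in _ + X]big_ord_recr /=.
rewrite addrA -big_split /= /log_coef !subnn !bin0; congr (_ + _); last by rewrite mulrAC.
apply: eq_bigr => -[m /= lt_mn1] _; rewrite subSn //.
case: m lt_mn1 => [|m] _ /=; first by rewrite invr0 !(mulr0, mul0r) addr0.
by rewrite binS natrD !exprS; field; rewrite nat1r pnatr_eq0.
Qed.
End LogExpansion.

Section PadicLowerBound.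
Variable p : nat.
Hypothesis p_pr : prime p.

Definition padic_ge (e : nat) (r : rat) : Prop :=
  exists u d : int, ~~ (p%:Z %| d)%Z /\ r * d%:~R = (p ^ e)%:R * u%:~R.

Lemma ndvdz_mul (d d' : int) :
  ~~ (p%:Z %| d)%Z -> ~~ (p%:Z %| d')%Z -> ~~ (p%:Z %| d * d')%Z.
Proof. by rewrite !dvdzE abszM Euclid_dvdM // negb_or => -> ->. Qed.

Lemma ndvdz1 : ~~ (p%:Z %| 1)%Z.
Proof. by rewrite dvdzE dvdn1 neq_ltn prime_gt1 ?orbT. Qed.

Lemma padic_ge0 e : padic_ge e 0.
Proof. by exists 0, 1; rewrite ndvdz1 !mul0r mulr0. Qed.

Lemma padic_ge_int (z : int) : padic_ge 0 z%:~R.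
Proof. by exists z, 1; rewrite ndvdz1 expn0 mul1r mulr1. Qed.

Lemma padic_geD e r r' : padic_ge e r -> padic_ge e r' -> padic_ge e (r + r').
Proof.
move=> [u [d [pNd E]]] [u' [d' [pNd' E']]].
exists (u * d' + u' * d), (d * d'); rewrite ndvdz_mul //; split=> //.
rewrite intrM intrD !intrM.
have -> : (r + r') * (d%:~R * d'%:~R) = r * d%:~R * d'%:~R + r' * d'%:~R * d%:~R by ring.
by rewrite E E'; ring.
Qed.

Lemma padic_geM e f r r' : padic_ge e r -> padic_ge f r' -> padic_ge (e + f) (r * r').
Proof.
move=> [u [d [pNd E]]] [u' [d' [pNd' E']]].
exists (u * u'), (d * d'); rewrite ndvdz_mul //; split=> //.
have -> : r * r' * (d * d')%:~R = r * d%:~R * (r' * d'%:~R) by rewrite intrM; ring.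
by rewrite E E' expnD natrM intrM; ring.
Qed.

Lemma padic_geW e f r : (f <= e)%N -> padic_ge e r -> padic_ge f r.
Proof.
move=> le_fe [u [d [pNd E]]]; exists (u * (p ^ (e - f))%:Z), d; split=> //.
by rewrite E intrM -(subnKC le_fe) expnD natrM addKn; ring.
Qed.

Lemma padic_geX e r m : padic_ge e r -> padic_ge (e * m) (r ^+ m).
Proof.
move=> r_ge; elim: m => [|m IH]; first by rewrite muln0 expr0; apply: (padic_ge_int 1).
by rewrite exprS mulnS; apply: padic_geM.
Qed.

Lemma padic_ge_sum e I (r : seq I) (P : pred I) (F : I -> rat) :
  (forall i, P i -> padic_ge e (F i)) -> padic_ge e (\sum_(i <- r | P i) F i).
Proof. by apply: big_ind; [exact: padic_ge0 | exact: padic_geD]. Qed.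

Lemma padic_ge_divn e r m :
  (0 < m)%N -> padic_ge (e + logn p m) r -> padic_ge e (r / m%:R).
Proof.
move=> m_gt0 [u [d [pNd E]]]; have [m' p_coprime_m' def_m] := pfactor_coprime p_pr m_gt0.
exists u, (d * m'%:Z); split; first by rewrite ndvdz_mul // dvdzE -prime_coprime.
have d_neq0 : (d%:~R : rat) != 0 by rewrite intr_eq0; apply: contraNneq pNd => ->.
have -> : r = (p ^ (e + logn p m))%:R * u%:~R / d%:~R by rewrite -E mulfK.
rewrite {2}def_m intrM pmulrn expnD !natrM; field.
move: m_gt0; rewrite {1}def_m muln_gt0 => /andP[m'_gt0 pl_gt0].
by rewrite d_neq0 !pnatr_eq0 -!lt0n m'_gt0 pl_gt0.
Qed.

Lemma padic_ge_p_div d : ~~ (p%:Z %| d)%Z -> padic_ge 1 (p%:R / d%:~R).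
Proof.
move=> pNd; exists 1, d; split=> //; rewrite divfK ?expn1 ?mulr1 //.
by rewrite intr_eq0; apply: contraNneq pNd => ->.
Qed.

Lemma padic_ge_numq_denq e r : padic_ge e r ->
  (p ^ e %| `|numq r|)%N /\ ~~ (p %| `|denq r|)%N.
Proof.
move=> [u [d [pNd E]]].
have num_den : (`|numq r| * `|d| = `|denq r| * (p ^ e * `|u|))%N.
  rewrite -(absz_nat (p ^ e)) -!abszM; congr `|_|%N; apply: (@intr_inj rat).
  by rewrite !intrM numqE -E; ring.
have den_coprime_num : coprime `|denq r| `|numq r| by rewrite coprime_sym coprime_num_den.
have den_dvd_d : (`|denq r| %| `|d|)%N.
  by rewrite -(Gauss_dvdr _ den_coprime_num) num_den dvdn_mulr.
split.
  have p_coprime_d : coprime (p ^ e) `|d| by rewrite coprimeXl // prime_coprime.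
  by rewrite -(Gauss_dvdl _ p_coprime_d) num_den dvdn_mull // dvdn_mulr.
by apply: contra pNd; rewrite dvdzE => /dvdn_trans ->.
Qed.

Lemma lt_ext_padic_val (M : int) e r :
  M < e%:Z -> padic_ge e r -> lt_ext M (padic_val p r).
Proof.
move=> lt_Me /padic_ge_numq_denq[pe_dvd_num pNden]; rewrite /lt_ext /padic_val.
have [// | r_neq0] := eqVneq r 0.
rewrite (@logn_coprime p `|denq r|) ?prime_coprime // subr0 (lt_le_trans lt_Me) // lez_nat.
by rewrite -pfactor_dvdn // absz_gt0 numq_eq0.
Qed.

Lemma padic_ge_sum_log_poly e s :
  padic_ge 2 s -> padic_ge e (\sum_(1 <= k < (e.*2).+1) log_poly s k).
Proof.
move=> s_ge2; rewrite sum_log_poly; apply: padic_ge_sum => -[[|m] /= _] _.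
  by rewrite invr0 mulr0; apply: padic_ge0.
have [le_me | lt_em] := leqP m.+1 e.
  by rewrite bin_small ?mulr0n ?mulr0 ?mul0r; [apply: padic_ge0 | lia].
apply: padic_ge_divn => //; apply: (padic_geW (e := 0 + 2 * m.+1)).
  by have := ltn_logl p (ltn0Sn m); lia.
apply: padic_geM; last exact: padic_geX.
have := padic_ge_int ((-1) ^+ (e.*2 - m.+1) * 'C(m, e.*2 - m.+1)%:Z).
by rewrite rmorphM /= rmorphXn rmorphN1 -pmulrn.
Qed.

End PadicLowerBound.

Theorem theorem3 (p : nat) (a : int) :
  prime p -> ~~ (p%:Z %| a)%Z ->
  forall M : int, exists n : nat, (1 <= n)%N /\ lt_ext M (padic_val p (S p a n)).
Proof.
move=> p_pr pNa M; set b := p%:Z - a.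
have pNb : ~~ (p%:Z %| b)%Z by rewrite /b rpredBl ?dvdzz // rpredN.
have a_neq0 : (a%:~R : rat) != 0 by rewrite intr_eq0; apply: contraNneq pNa => ->.
have b_neq0 : (b%:~R : rat) != 0 by rewrite intr_eq0; apply: contraNneq pNb => ->.
have bE : (b%:~R : rat) = p%:R - a%:~R by rewrite intrB -pmulrn.
pose x : rat := p%:R / a%:~R; pose y : rat := p%:R / b%:~R.
have xy : x * y = x + y by rewrite /x /y bE; field; rewrite -bE a_neq0 b_neq0.
have S_log n : S p a n = \sum_(1 <= k < n.+1) log_poly (x + y) k.
  apply: eq_big_nat => k /andP[k_gt0 _].
  have k_neq0 : (k%:R : rat) != 0 by rewrite pnatr_eq0 -lt0n.
  rewrite -[log_poly _ _](mulKf k_neq0) -power_sum_log_poly // /x /y.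
  by rewrite !exprMn !exprVn -/b; ring.
have s_ge2 : padic_ge p 2 (x + y).
  by rewrite -xy; apply: (padic_geM p_pr (e := 1) (f := 1)); apply: padic_ge_p_div.
exists (`|M|.+1).*2; split; first by rewrite double_gt0.
rewrite S_log; apply: (lt_ext_padic_val p_pr (e := `|M|.+1)); first lia.
exact: padic_ge_sum_log_poly.
Qed.
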